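(* Assume $\tau_h<\sqrt{1+\boldsymbol\kappa^{-2}}$, and let $\mathcal T_h$ be an ADT. Let $T\in\mathcal T_h$ be a triangle whose edge vectors are $he,hf,hg$, with $e,f,g\in\mathbb Z^2$ oriented so that $e+f+g=0$. Then: (i) $\max\{\|e\|,\|f\|,\|g\|\}\le2\boldsymbol\kappa$; (ii) $|\det(e,f)|=1$, hence $|T|=h^2/2$; (iii) $\langle e,\mathbf M(z)f\rangle\le\theta_h$ for every $z\in T$, where $\theta_h:=\boldsymbol\kappa(3+9\tau_{2h}^2)(\tau_{2h}^2-1)$.
   Context: Let $\mathbf D:\mathbb R^2\to S_2^+$ be continuous and $\mathbb Z^2$-periodic. Set $\mathbf M(z):=\det(\mathbf D(z))^{1/2}\mathbf D(z)^{-1}$, $\|e\|_M:=\sqrt{\langle e,Me\rangle}$, $\kappa(M):=\sqrt{\|M\|\|M^{-1}\|}$, and $\boldsymbol\kappa:=\max_z\kappa(\mathbf D(z))$. Let $h=1/n$ for an integer $n\ge 1$. Voronoi construction: $\delta_p(q):=\|q-p\|_{\mathbf M(p)}$, $\Delta_h(q):=\min_{p\in h\mathbb Z^2}\delta_p(q)$, and $\mathrm{Vor}_h(p):=\{q:\delta_p(q)=\Delta_h(q)\}$. For each point $q$ lying in the Voronoi cells of at least three distinct grid points, let $T_q$ be the convex hull of all grid points whose cells contain $q$, and let $\mathcal Q_h:=\{T_q\}$. When $\mathcal Q_h$ is a polygonization of $\mathbb R^2$ into strictly convex polygons with vertex set $h\mathbb Z^2$ (true under the assumption), an ADT $\mathcal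 T_h$ is any $\mathbb Z^2$-periodic triangulation obtained by triangulating each element of $\mathcal Q_h$ without adding vertices. $\tau(p,q)$ is the smallest $\tau\ge1$ with $\tau^{-2}\mathbf M(p)\le\mathbf M(q)\le\tau^2\mathbf M(p)$. For any $h>0$, $\tau_h:=\max\{\tau(p,q):\|p-q\|\le2\boldsymbol\kappa h\}$. *)

From Stdlib Require Import Reals List ZArith.
Open Scope R_scope.

Definition R2 : Type := (R * R)%type.
Definition vadd (u v : R2) : R2 := (fst u + fst v, snd u + snd v).
Definition vsub (u v : R2) : R2 := (fst u - fst v, snd u - snd v).
Definition vscale (t : R) (u : R2) : R2 := (t * fst u, t * snd u).
Definition dot (u v : R2) : R := fst u * fst v + snd u * snd v.
Definition enorm (u : R2) : R := sqrt (dot u u).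
Definition det2 (u v : R2) : R := fst u * snd v - snd u * fst v.
Definition zvec (k : Z * Z) : R2 := (IZR (fst k), IZR (snd k)).

(** Symmetric 2x2 matrices [[a,b],[b,c]] represented by (a,b,c). *)
Definition Sym2 : Type := (R * R * R)%type.
Definition sa (m : Sym2) : R := fst (fst m).
Definition sb (m : Sym2) : R := snd (fst m).
Definition sc (m : Sym2) : R := snd m.
Definition sdet (m : Sym2) : R := sa m * sc m - sb m * sb m.
Definition mulv (m : Sym2) (x : R2) : R2 :=
  (sa m * fst x + sb m * snd x, sb m * fst x + sc m * snd x).
Definition bilin (m : Sym2) (u v : R2) : R := dot u (mulv m v).
Definition quad (m : Sym2) (x : R2) : R := bilin m x x.
Definition smul (t : R) (m : Sym2) : Sym2 := (t * sa m, t * sb m, t * sc m).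
Definition sinv (m : Sym2) : Sym2 :=
  (sc m / sdet m, - sb m / sdet m, sa m / sdet m).
Definition SPD (m : Sym2) : Prop := 0 < sa m /\ 0 < sdet m.
Definition loewner_le (A B : Sym2) : Prop := forall x, quad A x <= quad B x.

Definition is_opnorm (m : Sym2) (r : R) : Prop :=
  is_lub (fun t => exists x, enorm x = 1 /\ t = enorm (mulv m x)) r.
Definition is_kappa (m : Sym2) (k : R) : Prop :=
  exists r1 r2, is_opnorm m r1 /\ is_opnorm (sinv m) r2 /\ k = sqrt (r1 * r2).

Definition IsMax (S : R -> Prop) (x : R) : Prop := S x /\ forall y, S y -> y <= x.
Definition IsMin (S : R -> Prop) (x : R) : Prop := S x /\ forall y, S y -> x <= y.

Definition cont_R2 (f : R2 -> R) : Prop :=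
  forall z eps, 0 < eps -> exists del, 0 < del /\
    forall w, enorm (vsub w z) < del -> Rabs (f w - f z) < eps.
Definition D_admissible (D : R2 -> Sym2) : Prop :=
  (forall z, SPD (D z)) /\
  cont_R2 (fun z => sa (D z)) /\ cont_R2 (fun z => sb (D z)) /\
  cont_R2 (fun z => sc (D z)) /\
  (forall z k, D (vadd z (zvec k)) = D z).

Definition Mof (D : R2 -> Sym2) (z : R2) : Sym2 :=
  smul (sqrt (sdet (D z))) (sinv (D z)).
Definition Mnorm (m : Sym2) (e : R2) : R := sqrt (quad m e).

Definition is_kappa_max (D : R2 -> Sym2) (K : R) : Prop :=
  IsMax (fun k => exists z, is_kappa (D z) k) K.

Definition tau_adm (D : R2 -> Sym2) (p q : R2) (t : R) : Prop :=
  1 <= t /\ loewner_le (smul (/ (t * t)) (Mof D p)) (Mof D q)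
         /\ loewner_le (Mof D q) (smul (t * t) (Mof D p)).
Definition is_tau (D : R2 -> Sym2) (p q : R2) (t : R) : Prop :=
  IsMin (tau_adm D p q) t.
Definition is_tau_h (D : R2 -> Sym2) (K h : R) (t : R) : Prop :=
  IsMax (fun s => exists p q, enorm (vsub p q) <= 2 * K * h /\ is_tau D p q s) t.

Definition grid (h : R) (p : R2) : Prop := exists k : Z * Z, p = vscale h (zvec k).
Definition delta (D : R2 -> Sym2) (p q : R2) : R := Mnorm (Mof D p) (vsub q p).
Definition inVor (D : R2 -> Sym2) (h : R) (p q : R2) : Prop :=
  grid h p /\ forall p', grid h p' -> delta D p q <= delta D p' q.
Definition Gen (D : R2 -> Sym2) (h : R) (q : R2) : R2 -> Prop := fun p => inVor D h p q.
Definition multi_point (D : R2 -> Sym2) (h : R) (q : R2) : Prop :=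
  exists p1 p2 p3, Gen D h q p1 /\ Gen D h q p2 /\ Gen D h q p3 /\
    p1 <> p2 /\ p1 <> p3 /\ p2 <> p3.

Definition conv (S : R2 -> Prop) (x : R2) : Prop :=
  exists l : list (R * R2),
    Forall (fun wp => 0 <= fst wp /\ S (snd wp)) l /\
    fold_right (fun wp acc => fst wp + acc) 0 l = 1 /\
    fold_right (fun wp acc => vadd (vscale (fst wp) (snd wp)) acc) (0, 0) l = x.
Definition Tq (D : R2 -> Sym2) (h : R) (q : R2) : R2 -> Prop := conv (Gen D h q).

Definition interior (S : R2 -> Prop) (x : R2) : Prop :=
  exists eps, 0 < eps /\ forall y, enorm (vsub y x) < eps -> S y.
Definition set_eq (A B : R2 -> Prop) : Prop := forall x, A x <-> B x.
Definition subset (A B : R2 -> Prop) : Prop := forall x, A x -> B x.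
Definition translate (V : R2 -> Prop) (k : Z * Z) : R2 -> Prop :=
  fun x => V (vsub x (zvec k)).

(** A triangle is given by its vertex set V = {a,b,c} (non-collinear);
    the triangle itself (as a point set) is conv V. *)
Definition is_triangle_vs (V : R2 -> Prop) : Prop :=
  exists a b c, det2 (vsub b a) (vsub c a) <> 0 /\
    set_eq V (fun x => x = a \/ x = b \/ x = c).

(** An ADT: a Z^2-periodic triangulation obtained by triangulating each
    element T_q of Q_h without adding vertices. Th is the set of triangles
    (by vertex sets). *)
Definition ADT (D : R2 -> Sym2) (h : R) (Th : (R2 -> Prop) -> Prop) : Prop :=
  (forall V, Th V -> is_triangle_vs V) /\
  (forall V V', Th V -> set_eq V V' -> Th V') /\
  (forall V k, Th V -> Th (translate V k)) /\
  (forall V, Th V -> exists q, multi_point D h q /\ subset V (Gen D h q)) /\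
  (forall q, multi_point D h q ->
     forall x, Tq D h q x -> exists V, Th V /\ subset V (Gen D h q) /\ conv V x) /\
  (forall q V V', multi_point D h q -> Th V -> Th V' ->
     subset V (Gen D h q) -> subset V' (Gen D h q) ->
     (exists x, interior (conv V) x /\ interior (conv V') x) -> set_eq V V').

From Stdlib Require Import Reals List ZArith Lra Lia Psatz Classical.
Open Scope R_scope.

(* Every triangle of an ADT has its vertices a, b, c in the Voronoi cells of one
   point q, so they lie on a common "Voronoi sphere": with r2 the minimum of
   ||q - p||^2_{M(p)} over the grid, ||q - a||^2_{M(a)} = ||q - b||^2_{M(b)} =
   ||q - c||^2_{M(c)} = r2.  The proof rests on three estimates for such points:
   - kappa controls M from both sides, |x|^2 / kappa <= ||x||^2_M <= kappa |x|^2,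
     and rounding q to the grid gives r2 <= kappa h^2 / 2; hence every chord of
     the sphere has length at most sqrt 2 kappa h, which is (i);
   - if |det(e,f)| >= 2, the lattice triangle contains a grid point T other than
     its vertices; writing q - T as the barycentric average of q - a, q - b, q - c
     and comparing M(T) with M(a), M(b), M(c) through tau_h contradicts the
     Voronoi inequality at T when tau_h^2 < 1 + kappa^{-2}, which is (ii);
   - at the reflected grid point p = a + c - b, the Voronoi inequality and the
     identity ||q-p||^2 = ||q-a||^2 - ||q-b||^2 + ||q-c||^2 - 2h^2 <e, f> bound
     <e, M(p) f>, and comparing M(p) with M(z) through tau_2h gives (iii). *)

Lemma quad_expand (m : Sym2) (x : R2) :
  quad m x = sa m * fst x * fst x + 2 * sb m * fst x * snd x + sc m * snd x * snd x.
Proof. unfold quad, bilin, dot, mulv; simpl; ring. Qed.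

Lemma quad_smul (t : R) (m : Sym2) (x : R2) : quad (smul t m) x = t * quad m x.
Proof. rewrite !quad_expand; unfold smul, sa, sb, sc; simpl; ring. Qed.

Lemma quad_vscale (m : Sym2) (t : R) (x : R2) : quad m (vscale t x) = t * t * quad m x.
Proof. rewrite !quad_expand; unfold vscale; simpl; ring. Qed.

Lemma bilin_vscale (m : Sym2) (s t : R) (x y : R2) :
  bilin m (vscale s x) (vscale t y) = s * t * bilin m x y.
Proof. unfold bilin, dot, mulv, vscale; simpl; ring. Qed.

Lemma bilin_polar (m : Sym2) (u v : R2) :
  bilin m u v = (quad m (vadd u v) - quad m (vsub u v)) / 4.
Proof. rewrite !quad_expand; unfold bilin, dot, mulv, vadd, vsub; simpl; field. Qed.

Lemma quad_parallelogram (m : Sym2) (u v : R2) :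
  quad m (vadd u v) + quad m (vsub u v) = 2 * quad m u + 2 * quad m v.
Proof. rewrite !quad_expand; unfold vadd, vsub; simpl; ring. Qed.

Lemma quad_sub_le (m : Sym2) (x y : R2) :
  (forall v, 0 <= quad m v) -> quad m (vsub x y) <= 2 * quad m x + 2 * quad m y.
Proof. intros Hm. pose proof (quad_parallelogram m x y). pose proof (Hm (vadd x y)). lra. Qed.

(* The identity behind (iii): the reflected point a + c - b of a triangle a b c. *)
Lemma quad_reflect_identity (m : Sym2) (q a b c : R2) :
  quad m (vsub q (vsub (vadd a c) b)) =
  quad m (vsub q a) - quad m (vsub q b) + quad m (vsub q c) - 2 * bilin m (vsub b a) (vsub c b).
Proof.
  unfold bilin, dot, mulv. rewrite !quad_expand; unfold vsub, vadd; simpl. ring.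
Qed.

Lemma dot_nonneg (v : R2) : 0 <= dot v v.
Proof. unfold dot; nra. Qed.

Lemma dot_vscale (t : R) (x : R2) : dot (vscale t x) (vscale t x) = t * t * dot x x.
Proof. unfold dot, vscale; simpl; ring. Qed.

Lemma dot_vsub_sym (x y : R2) : dot (vsub x y) (vsub x y) = dot (vsub y x) (vsub y x).
Proof. unfold dot, vsub; simpl; ring. Qed.

Lemma dot_sub_le (u v : R2) : dot (vsub u v) (vsub u v) <= 2 * dot u u + 2 * dot v v.
Proof.
  destruct u as [u1 u2], v as [v1 v2]; unfold dot, vsub; simpl.
  pose proof (Rle_0_sqr (u1 + v1)); pose proof (Rle_0_sqr (u2 + v2)); unfold Rsqr in *; nra.
Qed.

Lemma vsub_vsub_cancel (q x y : R2) : vsub (vsub q x) (vsub q y) = vsub y x.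
Proof. unfold vsub; simpl; f_equal; ring. Qed.

Lemma enorm_le (v : R2) (B : R) : 0 <= B -> dot v v <= B * B -> enorm v <= B.
Proof.
  intros HB H. unfold enorm. rewrite <- (sqrt_square B HB). now apply sqrt_le_1_alt.
Qed.

Lemma dot_unit_le (u w : R2) : dot u u = 1 -> dot u w <= enorm w.
Proof.
  intros Hu. destruct (Rle_lt_dec (dot u w) 0) as [H|H].
  - pose proof (sqrt_pos (dot w w)); unfold enorm; lra.
  - unfold enorm. rewrite <- (sqrt_square (dot u w)) by lra. apply sqrt_le_1_alt.
    destruct u as [u1 u2], w as [w1 w2]; unfold dot in *; simpl in *.
    pose proof (Rle_0_sqr (u1 * w2 - u2 * w1)); unfold Rsqr in *; nra.
Qed.

Definition rot (x : R2) : R2 := (- snd x, fst x).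

Definition Mmat (m : Sym2) : Sym2 := smul (sqrt (sdet m)) (sinv m).

(* In dimension two the inverse is the adjugate: <u, m^{-1} u> = <u^perp, m u^perp> / det m. *)
Lemma quad_adjugate (m : Sym2) (u : R2) :
  sdet m <> 0 -> quad (sinv m) u = quad m (rot u) / sdet m.
Proof.
  intros H. rewrite !quad_expand. unfold sinv, rot, sa, sb, sc in *; simpl. field. exact H.
Qed.

(* ||x||_m^2 ||x^perp||_m^2 = det m |x|^4 + ((a - c) x1 x2 - b (x1^2 - x2^2))^2 >= det m |x|^4. *)
Lemma quad_rot_product (m : Sym2) (x : R2) :
  sdet m * (dot x x * dot x x) <= quad m x * quad m (rot x).
Proof.
  destruct m as [[A B] C], x as [x1 x2].
  rewrite !quad_expand; unfold sdet, rot, dot, sa, sb, sc; simpl.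
  pose proof (Rle_0_sqr ((A - C) * x1 * x2 - B * (x1 * x1 - x2 * x2))) as Hsq.
  unfold Rsqr in Hsq. nra.
Qed.

Lemma spd_quad_nonneg (m : Sym2) (x : R2) : SPD m -> 0 <= quad m x.
Proof.
  destruct m as [[A B] C], x as [x1 x2]; intros [HA HD].
  rewrite quad_expand; unfold sdet, sa, sb, sc in *; simpl in *.
  assert (E : A * (A * x1 * x1 + 2 * B * x1 * x2 + C * x2 * x2) =
              (A * x1 + B * x2) * (A * x1 + B * x2) + (A * C - B * B) * (x2 * x2)) by ring.
  assert (0 <= A * (A * x1 * x1 + 2 * B * x1 * x2 + C * x2 * x2)).
  { rewrite E. pose proof (Rle_0_sqr (A * x1 + B * x2)); pose proof (Rle_0_sqr x2).
    unfold Rsqr in *. nra. }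
  nra.
Qed.

Lemma quad_Mmat (m : Sym2) (x : R2) :
  SPD m -> quad (Mmat m) x = sqrt (sdet m) * (quad m (rot x) / sdet m).
Proof.
  intros [_ HD]. unfold Mmat. rewrite quad_smul, quad_adjugate; lra.
Qed.

Lemma Mmat_quad_nonneg (m : Sym2) (x : R2) : SPD m -> 0 <= quad (Mmat m) x.
Proof.
  intros Hm. rewrite quad_Mmat by exact Hm. destruct Hm as [HA HD].
  apply Rmult_le_pos; [apply sqrt_pos|].
  apply Rmult_le_pos; [apply spd_quad_nonneg; split; auto|left; now apply Rinv_0_lt_compat].
Qed.

(* M has determinant one, whence ||x||^2_M ||x^perp||^2_M >= |x|^4. *)
Lemma Mmat_det_one (m : Sym2) (x : R2) :
  SPD m -> dot x x * dot x x <= quad (Mmat m) x * quad (Mmat m) (rot x).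
Proof.
  intros Hm. rewrite !quad_Mmat by exact Hm. pose proof Hm as [_ HD].
  assert (Hrr : quad m (rot (rot x)) = quad m x)
    by (rewrite !quad_expand; unfold rot; simpl; ring).
  rewrite Hrr.
  set (s := sqrt (sdet m)).
  assert (Hs : s * s = sdet m) by (apply sqrt_sqrt; lra).
  replace (s * (quad m (rot x) / sdet m) * (s * (quad m x / sdet m)))
    with (quad m x * quad m (rot x) / sdet m).
  - apply (Rmult_le_reg_l (sdet m)); [lra|].
    replace (sdet m * (quad m x * quad m (rot x) / sdet m)) with (quad m x * quad m (rot x))
      by (field; lra).
    apply quad_rot_product.
  - replace (s * (quad m (rot x) / sdet m) * (s * (quad m x / sdet m)))
      with (s * s * (quad m x * quad m (rot x)) / (sdet m * sdet m)) by (field; lra).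
    rewrite Hs. field. lra.
Qed.

Lemma opnorm_quad (m : Sym2) (r : R) (u : R2) :
  is_opnorm m r -> dot u u = 1 -> quad m u <= r.
Proof.
  intros [Hub _] Hu. unfold quad, bilin.
  eapply Rle_trans; [now apply dot_unit_le|].
  apply Hub. exists u; split; [unfold enorm; rewrite Hu; apply sqrt_1|reflexivity].
Qed.

Lemma opnorm_ex (m : Sym2) : exists r, is_opnorm m r.
Proof.
  destruct m as [[A B] C].
  set (E := fun t => exists x, enorm x = 1 /\ t = enorm (mulv (A, B, C) x)).
  assert (Hb : bound E).
  { exists (sqrt (A * A + 2 * (B * B) + C * C)). intros t [x [Hx ->]].
    unfold enorm. apply sqrt_le_1_alt.
    assert (Hd : dot x x = 1).
    { unfold enorm in Hx. rewrite <- (sqrt_sqrt (dot x x)) by apply dot_nonneg.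
      rewrite Hx; ring. }
    destruct x as [x1 x2]; unfold dot, mulv, sa, sb, sc in *; simpl in *.
    pose proof (Rle_0_sqr (A * x2 - B * x1)); pose proof (Rle_0_sqr (B * x2 - C * x1)).
    unfold Rsqr in *. nra. }
  assert (Hne : exists t, E t).
  { exists (enorm (mulv (A, B, C) (1, 0))), (1, 0). split; auto.
    unfold enorm, dot; simpl. replace (1 * 1 + 0 * 0) with 1 by ring. apply sqrt_1. }
  destruct (completeness E Hb Hne) as [r Hr]. now exists r.
Qed.

(* On unit vectors ||u||^2_M = (<u^perp, m u^perp> <u, m^{-1} u>)^{1/2}
   <= (||m|| ||m^{-1}||)^{1/2} = kappa(m). *)
Lemma Mmat_unit_bound (m : Sym2) (k : R) (u : R2) :
  SPD m -> is_kappa m k -> dot u u = 1 -> quad (Mmat m) u <= k.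
Proof.
  intros Hm [r1 [r2 [H1 [H2 ->]]]] Hu.
  pose proof Hm as [_ HD].
  set (P := quad m (rot u)).
  assert (HP0 : 0 <= P) by (apply spd_quad_nonneg, Hm).
  assert (HP1 : P <= r1).
  { apply (opnorm_quad m r1 (rot u) H1).
    destruct u as [u1 u2]; unfold rot, dot in *; simpl in *; lra. }
  assert (HP2 : P / sdet m <= r2).
  { replace (P / sdet m) with (quad (sinv m) u) by (apply quad_adjugate; lra).
    now apply opnorm_quad. }
  assert (HPD : 0 <= P / sdet m) by (apply Rmult_le_pos; [lra|left; now apply Rinv_0_lt_compat]).
  rewrite quad_Mmat by exact Hm. fold P.
  set (s := sqrt (sdet m)).
  assert (Hs : s * s = sdet m) by (apply sqrt_sqrt; lra).
  assert (Hs0 : 0 <= s) by apply sqrt_pos.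
  rewrite <- (sqrt_square (s * (P / sdet m))) by nra.
  apply sqrt_le_1_alt.
  replace (s * (P / sdet m) * (s * (P / sdet m))) with (P * (P / sdet m)).
  - apply Rmult_le_compat; lra.
  - replace (s * (P / sdet m) * (s * (P / sdet m))) with (s * s * (P / sdet m) * (P / sdet m))
      by ring.
    rewrite Hs. field. lra.
Qed.

Lemma quad_bound_from_unit (m : Sym2) (k : R) (x : R2) :
  (forall u, dot u u = 1 -> quad m u <= k) -> quad m x <= k * dot x x.
Proof.
  intros Hu. pose proof (dot_nonneg x) as H0.
  destruct (Req_dec (dot x x) 0) as [Hz|Hz].
  - assert (fst x = 0 /\ snd x = 0) as [Hx1 Hx2]
      by (destruct x; unfold dot in Hz; simpl in *; nra).
    rewrite quad_expand, Hz, Hx1, Hx2. lra.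
  - set (s := sqrt (dot x x)).
    assert (Hs : s * s = dot x x) by (apply sqrt_sqrt; lra).
    assert (Hsp : 0 < s) by (apply sqrt_lt_R0; lra).
    assert (Hx : x = vscale s (vscale (/ s) x))
      by (destruct x; unfold vscale; simpl; f_equal; field; lra).
    assert (Hunit : dot (vscale (/ s) x) (vscale (/ s) x) = 1).
    { replace (dot (vscale (/ s) x) (vscale (/ s) x)) with (/ s * / s * dot x x)
        by (destruct x; unfold vscale, dot; simpl; ring).
      rewrite <- Hs. field. lra. }
    rewrite Hx at 1. rewrite quad_vscale, <- Hs.
    specialize (Hu _ Hunit). nra.
Qed.

(* The uniform bounds |x|^2 / kappa <= ||x||^2_{M(z)} <= kappa |x|^2, with kappa >= 1;
   the lower bound follows from the upper one by the determinant-one inequality. *)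
Lemma kappa_bounds (D : R2 -> Sym2) (K : R) :
  (forall z, SPD (D z)) -> is_kappa_max D K ->
  (forall z x, quad (Mof D z) x <= K * dot x x) /\
  (forall z x, dot x x <= K * quad (Mof D z) x) /\ 1 <= K.
Proof.
  intros HS [_ HK]. change (Mof D) with (fun z => Mmat (D z)); cbv beta.
  assert (KU : forall z x, quad (Mmat (D z)) x <= K * dot x x).
  { intros z x. apply quad_bound_from_unit. intros u Hu.
    destruct (opnorm_ex (D z)) as [r1 H1], (opnorm_ex (sinv (D z))) as [r2 H2].
    assert (Hk : is_kappa (D z) (sqrt (r1 * r2))) by (exists r1, r2; auto).
    eapply Rle_trans; [apply (Mmat_unit_bound _ _ _ (HS z) Hk Hu)|].
    apply HK. now exists z. }
  assert (Hpos : forall z x, 0 <= quad (Mmat (D z)) x) by (intros; apply Mmat_quad_nonneg, HS).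
  assert (Hrot : forall x, dot (rot x) (rot x) = dot x x)
    by (intros [x1 x2]; unfold rot, dot; simpl; ring).
  assert (K1 : 1 <= K).
  { set (x := (1, 0) : R2). assert (Hx : dot x x = 1) by (unfold x, dot; simpl; ring).
    pose proof (Mmat_det_one _ x (HS x)) as Hd.
    pose proof (KU x x) as Ha. pose proof (KU x (rot x)) as Hb.
    pose proof (Hpos x x). pose proof (Hpos x (rot x)).
    rewrite Hrot, Hx in *. nra. }
  split; [exact KU|split; [|exact K1]].
  intros z x. pose proof (Mmat_det_one _ x (HS z)) as Hd.
  pose proof (KU z (rot x)) as Hr. pose proof (Hpos z x). pose proof (dot_nonneg x).
  rewrite Hrot in Hr.
  destruct (Req_dec (dot x x) 0) as [Hz|Hz].
  { rewrite Hz. apply Rmult_le_pos; lra. }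
  assert (dot x x * dot x x <= quad (Mmat (D z)) x * (K * dot x x))
    by (eapply Rle_trans; [exact Hd|]; apply Rmult_le_compat_l; auto).
  nra.
Qed.

Definition metric_close (t : R) (m1 m2 : Sym2) : Prop :=
  forall x, quad m2 x <= t * t * quad m1 x /\ quad m1 x <= t * t * quad m2 x.

Lemma metric_close_loewner (t : R) (m1 m2 : Sym2) : 1 <= t ->
  (loewner_le (smul (/ (t * t)) m1) m2 /\ loewner_le m2 (smul (t * t) m1)) <->
  metric_close t m1 m2.
Proof.
  intros Ht. assert (Htt : 0 < t * t) by nra.
  unfold loewner_le, metric_close. setoid_rewrite quad_smul. split.
  - intros [H1 H2] x. split; [apply H2|].
    specialize (H1 x). apply (Rmult_le_compat_l (t * t)) in H1; [|lra].
    rewrite <- Rmult_assoc, Rinv_r, Rmult_1_l in H1; lra.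
  - intros H. split; intros x; [|apply H].
    apply (Rmult_le_reg_l (t * t)); [exact Htt|].
    rewrite <- Rmult_assoc, Rinv_r, Rmult_1_l by lra. apply H.
Qed.

Lemma metric_close_mono (s t : R) (m1 m2 : Sym2) :
  (forall x, 0 <= quad m1 x) -> (forall x, 0 <= quad m2 x) -> 0 <= s -> s <= t ->
  metric_close s m1 m2 -> metric_close t m1 m2.
Proof.
  intros H1 H2 Hs Hst H x. destruct (H x) as [Ha Hb].
  pose proof (H1 x); pose proof (H2 x).
  assert (s * s <= t * t) by nra. split; nra.
Qed.

(* 1/s >= 2 - s: a lower comparison without dividing by s. *)
Lemma ratio_lower_bound (s x y : R) : 1 <= s -> 0 <= y -> y <= s * x -> (2 - s) * y <= x.
Proof.
  intros Hs Hy Hyx.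
  assert (H : 0 <= s * (x - (2 - s) * y)).
  { pose proof (Rle_0_sqr (s - 1)). unfold Rsqr in *. nra. }
  destruct (Rle_lt_dec ((2 - s) * y) x); [assumption|nra].
Qed.

Lemma bilin_transfer (t : R) (m n : Sym2) (x y : R2) :
  1 <= t -> (forall v, 0 <= quad n v) -> metric_close t n m ->
  bilin m x y <= bilin n x y + (t * t - 1) * (quad n x + quad n y) / 2.
Proof.
  intros Ht Hn Hc. rewrite !bilin_polar.
  destruct (Hc (vadd x y)) as [Hp _]. destruct (Hc (vsub x y)) as [_ Hm].
  pose proof (ratio_lower_bound (t * t) (quad m (vsub x y)) (quad n (vsub x y))
    ltac:(nra) (Hn _) Hm).
  pose proof (quad_parallelogram n x y). nra.
Qed.

Lemma inf_exists (E : R -> Prop) :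
  (exists t, E t) -> (forall t, E t -> 1 <= t) ->
  exists m, (forall t, E t -> m <= t) /\ (forall m', (forall t, E t -> m' <= t) -> m' <= m).
Proof.
  intros [t0 Ht0] H1.
  set (E' := fun u => exists t, E t /\ u = - t).
  assert (Hb : bound E') by (exists (-1); intros u [t [Ht ->]]; specialize (H1 t Ht); lra).
  destruct (completeness E' Hb (ex_intro _ (- t0) (ex_intro _ t0 (conj Ht0 eq_refl))))
    as [m [Hub Hl]].
  exists (- m). split.
  - intros t Ht. assert (- t <= m) by (apply Hub; now exists t). lra.
  - intros m' Hm'. assert (m <= - m'); [|lra].
    apply Hl. intros u [t [Ht ->]]. specialize (Hm' t Ht). lra.
Qed.

Lemma inf_square_bound (E : R -> Prop) (m a c : R) :
  0 <= a -> 0 <= m -> (exists t, E t) ->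
  (forall t, E t -> 0 <= t /\ c <= t * t * a) ->
  (forall m', (forall t, E t -> m' <= t) -> m' <= m) ->
  c <= m * m * a.
Proof.
  intros Ha Hm [t0 Ht0] HE Hglb.
  destruct (Rle_lt_dec c 0) as [Hc|Hc]; [nra|].
  destruct (HE t0 Ht0) as [_ Hc0].
  assert (Ha' : 0 < a) by (destruct (Req_dec a 0) as [->|]; nra).
  set (s := sqrt (c / a)).
  assert (Hs : s * s = c / a) by (apply sqrt_sqrt; left; apply Rdiv_lt_0_compat; lra).
  assert (Hs0 : 0 <= s) by apply sqrt_pos.
  assert (Hsq : forall t, 0 <= t -> c <= t * t * a -> s <= t).
  { intros t Ht Htc. apply Rsqr_incr_0_var; [|exact Ht]. unfold Rsqr. rewrite Hs.
    apply (Rmult_le_reg_r a); [exact Ha'|]. unfold Rdiv.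
    rewrite Rmult_assoc, Rinv_l, Rmult_1_r; lra. }
  assert (Hsm : s <= m) by (apply Hglb; intros t Ht; apply Hsq; apply HE, Ht).
  assert (s * s * a <= m * m * a) by (apply Rmult_le_compat_r; nra).
  replace c with (s * s * a) by (rewrite Hs; field; lra). exact H.
Qed.

Section Tau.
Variable D : R2 -> Sym2.
Variable K : R.
Hypothesis KU : forall z x, quad (Mof D z) x <= K * dot x x.
Hypothesis KL : forall z x, dot x x <= K * quad (Mof D z) x.
Hypothesis K1 : 1 <= K.

Lemma quad_nonneg (z x : R2) : 0 <= quad (Mof D z) x.
Proof. pose proof (KL z x); pose proof (dot_nonneg x). nra. Qed.

(* kappa itself is admissible, so the infimum defining tau(p,q) is over a nonempty set. *)
Lemma tau_K (p q : R2) : metric_close K (Mof D p) (Mof D q).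
Proof.
  intros x. pose proof (KU p x); pose proof (KU q x); pose proof (KL p x); pose proof (KL q x).
  pose proof (dot_nonneg x). split; nra.
Qed.

(* The infimum of admissible tau is admissible, so tau(p,q) exists. *)
Lemma tau_exists (p q : R2) : exists s, is_tau D p q s.
Proof.
  assert (Hadm : forall t, tau_adm D p q t <-> 1 <= t /\ metric_close t (Mof D p) (Mof D q))
    by (intros t; unfold tau_adm; split; intros [Ht H];
        split; try exact Ht; now apply metric_close_loewner).
  assert (Hne : exists t, tau_adm D p q t) by (exists K; apply Hadm; split; [exact K1|apply tau_K]).
  destruct (inf_exists (tau_adm D p q) Hne) as [m [Hlow Hglb]];
    [intros t Ht; apply Hadm in Ht; tauto|].
  assert (Hm1 : 1 <= m) by (apply Hglb; intros t Ht; apply Hadm in Ht; tauto).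
  exists m. split; [|exact Hlow].
  apply Hadm. split; [exact Hm1|]. intros x. split;
    (apply (inf_square_bound (tau_adm D p q)); [apply quad_nonneg|lra|exact Hne| |exact Hglb]);
    intros t Ht; apply Hadm in Ht; destruct Ht as [Ht Hc]; split; try lra; apply Hc.
Qed.

Lemma tau_h_facts (h t : R) :
  0 <= h -> is_tau_h D K h t ->
  1 <= t /\ forall p p', enorm (vsub p p') <= 2 * K * h -> metric_close t (Mof D p) (Mof D p').
Proof.
  intros hpos [_ Hmax].
  assert (Hclose : forall p p', enorm (vsub p p') <= 2 * K * h ->
    1 <= t /\ metric_close t (Mof D p) (Mof D p')).
  { intros p p' Hd. destruct (tau_exists p p') as [s Hs].
    assert (Hst : s <= t) by (apply Hmax; exists p, p'; auto).
    destruct Hs as [[Hs1 Hs] _].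
    split; [lra|]. apply (metric_close_mono s); try (intros; apply quad_nonneg); try lra.
    now apply metric_close_loewner. }
  split; [|intros p p' Hd; apply Hclose, Hd].
  apply (Hclose (0, 0) (0, 0)), enorm_le; [nra|unfold vsub, dot; simpl; nra].
Qed.
End Tau.

Lemma tau_small (K t : R) :
  1 <= K -> 1 <= t -> t < sqrt (1 + / (K * K)) -> K * K * (t * t - 1) < 1.
Proof.
  intros K1 Ht1 Ht.
  assert (Hinv : 0 < / (K * K)) by (apply Rinv_0_lt_compat; nra).
  assert (Hs : sqrt (1 + / (K * K)) * sqrt (1 + / (K * K)) = 1 + / (K * K))
    by (apply sqrt_sqrt; lra).
  pose proof (sqrt_pos (1 + / (K * K))) as Hs0.
  assert (Htt : t * t < 1 + / (K * K)) by nra.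
  assert (H : K * K * (t * t - 1) < K * K * / (K * K)) by (apply Rmult_lt_compat_l; nra).
  rewrite Rinv_r in H by nra. exact H.
Qed.

Definition comb3 (la lb lc : R) (a b c : R2) : R2 :=
  vadd (vscale la a) (vadd (vscale lb b) (vscale lc c)).

Lemma conv_triangle (V : R2 -> Prop) (a b c z : R2) :
  set_eq V (fun x => x = a \/ x = b \/ x = c) -> conv V z ->
  exists la lb lc, 0 <= la /\ 0 <= lb /\ 0 <= lc /\ la + lb + lc = 1 /\
    z = comb3 la lb lc a b c.
Proof.
  intros HV [l [Hf [Hw Hp]]]. subst z.
  assert (G : forall l, Forall (fun wp => 0 <= fst wp /\ V (snd wp)) l ->
    exists la lb lc, 0 <= la /\ 0 <= lb /\ 0 <= lc /\
      la + lb + lc = fold_right (fun wp acc => fst wp + acc) 0 l /\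
      fold_right (fun wp acc => vadd (vscale (fst wp) (snd wp)) acc) (0, 0) l =
      comb3 la lb lc a b c).
  { induction l0 as [|[w x] l0 IH]; intros HF.
    - exists 0, 0, 0. simpl. repeat split; try lra.
      unfold comb3, vadd, vscale; simpl; f_equal; ring.
    - destruct (Forall_inv HF) as [Hw0 Hx]. destruct (IH (Forall_inv_tail HF))
        as [la [lb [lc [P1 [P2 [P3 [P4 P5]]]]]]].
      simpl in *. rewrite P5. unfold comb3, vadd, vscale in *; simpl.
      apply HV in Hx. destruct Hx as [ -> | [ -> | -> ] ].
      + exists (la + w), lb, lc. repeat split; try lra. f_equal; ring.
      + exists la, (lb + w), lc. repeat split; try lra. f_equal; ring.
      + exists la, lb, (lc + w). repeat split; try lra. f_equal; ring. }
  destruct (G l Hf) as [la [lb [lc [P1 [P2 [P3 [P4 P5]]]]]]].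
  exists la, lb, lc. repeat split; auto. lra.
Qed.

Lemma quad_comb3 (m : Sym2) (la lb lc : R) (x y z : R2) : la + lb + lc = 1 ->
  la * quad m x + lb * quad m y + lc * quad m z =
  quad m (comb3 la lb lc x y z)
  + la * quad m (vsub x (comb3 la lb lc x y z))
  + lb * quad m (vsub y (comb3 la lb lc x y z))
  + lc * quad m (vsub z (comb3 la lb lc x y z)).
Proof.
  intros H. replace la with (1 - lb - lc) by lra.
  rewrite !quad_expand; unfold comb3, vadd, vsub, vscale; simpl. ring.
Qed.

Lemma quad_comb3_le (m : Sym2) (la lb lc : R) (x y z : R2) :
  (forall v, 0 <= quad m v) -> 0 <= la -> 0 <= lb -> 0 <= lc -> la + lb + lc = 1 ->
  quad m (comb3 la lb lc x y z) <= la * quad m x + lb * quad m y + lc * quad m z.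
Proof.
  intros Hm Ha Hb Hc Hs. rewrite (quad_comb3 m la lb lc x y z Hs).
  pose proof (Hm (vsub x (comb3 la lb lc x y z))).
  pose proof (Hm (vsub y (comb3 la lb lc x y z))).
  pose proof (Hm (vsub z (comb3 la lb lc x y z))). nra.
Qed.

Lemma comb3_vsub (la lb lc : R) (x y z p : R2) : la + lb + lc = 1 ->
  vsub (comb3 la lb lc x y z) p = comb3 la lb lc (vsub x p) (vsub y p) (vsub z p).
Proof.
  intros H. replace la with (1 - lb - lc) by lra.
  unfold comb3, vadd, vsub, vscale; simpl; f_equal; ring.
Qed.

Lemma vsub_comb3 (la lb lc : R) (x y z p : R2) : la + lb + lc = 1 ->
  vsub p (comb3 la lb lc x y z) = comb3 la lb lc (vsub p x) (vsub p y) (vsub p z).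
Proof.
  intros H. replace la with (1 - lb - lc) by lra.
  unfold comb3, vadd, vsub, vscale; simpl; f_equal; ring.
Qed.

Lemma dot_comb3_le (la lb lc : R) (x y z p : R2) :
  0 <= la -> 0 <= lb -> 0 <= lc -> la + lb + lc = 1 ->
  dot (vsub (comb3 la lb lc x y z) p) (vsub (comb3 la lb lc x y z) p) <=
  la * dot (vsub x p) (vsub x p) + lb * dot (vsub y p) (vsub y p) +
  lc * dot (vsub z p) (vsub z p).
Proof.
  intros Ha Hb Hc Hs.
  assert (Hid : forall v, dot v v = quad (1, 0, 1) v)
    by (intros v; rewrite quad_expand; unfold dot, sa, sb, sc; simpl; ring).
  rewrite !Hid, comb3_vsub by exact Hs.
  apply quad_comb3_le; auto. intros v; rewrite <- Hid; apply dot_nonneg.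
Qed.

Definition zdet (u v : Z * Z) : Z := (fst u * snd v - snd u * fst v)%Z.

Lemma zvec_sub (u v : Z * Z) :
  zvec (fst u - fst v, snd u - snd v)%Z = vsub (zvec u) (zvec v).
Proof. unfold zvec, vsub; simpl; now rewrite !minus_IZR. Qed.

Lemma zvec_norm_ge1 (k : Z * Z) : k <> (0, 0)%Z -> 1 <= dot (zvec k) (zvec k).
Proof.
  destruct k as [k1 k2]; intros Hk; unfold dot, zvec; simpl.
  assert (H : (1 <= k1 * k1 + k2 * k2)%Z).
  { destruct (Z.eq_dec k1 0) as [->|H1]; [|nia].
    destruct (Z.eq_dec k2 0) as [->|H2]; [congruence|nia]. }
  apply IZR_le in H. rewrite plus_IZR, !mult_IZR in H. exact H.
Qed.

Lemma det2_zvec (e f : Z * Z) : det2 (zvec e) (zvec f) = IZR (zdet e f).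
Proof. unfold det2, zvec, zdet; simpl. now rewrite minus_IZR, !mult_IZR. Qed.

Open Scope Z_scope.

(* Reducing the coordinates of w modulo d = det(u,v) lands in the closed triangle
   0, u, v; if they are not both divisible by d, the reduced point is not a vertex. *)
Lemma reduce_to_triangle (u1 u2 v1 v2 w1 w2 : Z) :
  let d := u1 * v2 - u2 * v1 in
  2 <= d ->
  ~ ((w1 * v2 - w2 * v1) mod d = 0 /\ (u1 * w2 - u2 * w1) mod d = 0) ->
  exists z1 z2 : Z,
    let x := z1 * v2 - z2 * v1 in let y := u1 * z2 - u2 * z1 in
    0 <= x /\ 0 <= y /\ x + y <= d /\ ~ (x = 0 /\ y = 0) /\
    ~ (x = d /\ y = 0) /\ ~ (x = 0 /\ y = d).
Proof.
  intros d Hd Hn.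
  set (x0 := w1 * v2 - w2 * v1) in *. set (y0 := u1 * w2 - u2 * w1) in *.
  pose proof (Z.div_mod x0 d ltac:(lia)) as Ex. pose proof (Z.mod_pos_bound x0 d ltac:(lia)).
  pose proof (Z.div_mod y0 d ltac:(lia)) as Ey. pose proof (Z.mod_pos_bound y0 d ltac:(lia)).
  set (k := x0 / d) in *. set (l := y0 / d) in *.
  set (rx := x0 mod d) in *. set (ry := y0 mod d) in *.
  set (z1 := w1 - k * u1 - l * v1). set (z2 := w2 - k * u2 - l * v2).
  assert (Xz : z1 * v2 - z2 * v1 = rx)
    by (assert (z1 * v2 - z2 * v1 = x0 - k * d) by (unfold z1, z2, x0, d; ring); lia).
  assert (Yz : u1 * z2 - u2 * z1 = ry)
    by (assert (u1 * z2 - u2 * z1 = y0 - l * d) by (unfold z1, z2, y0, d; ring); lia).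
  destruct (Z_le_gt_dec (rx + ry) d) as [Hle|Hgt].
  - exists z1, z2. simpl. rewrite Xz, Yz. lia.
  - exists (u1 + v1 - z1), (u2 + v2 - z2). simpl.
    replace ((u1 + v1 - z1) * v2 - (u2 + v2 - z2) * v1) with (d - rx)
      by (rewrite <- Xz; unfold d; ring).
    replace (u1 * (u2 + v2 - z2) - u2 * (u1 + v1 - z1)) with (d - ry)
      by (rewrite <- Yz; unfold d; ring).
    lia.
Qed.

(* One of (1,0), (0,1) has coordinates not both divisible by d, for otherwise
   d^2 would divide d = det(u,v) >= 2. *)
Lemma lattice_point_in_triangle (u1 u2 v1 v2 : Z) :
  2 <= u1 * v2 - u2 * v1 ->
  exists z1 z2 : Z,
    let d := u1 * v2 - u2 * v1 in
    let x := z1 * v2 - z2 * v1 in let y := u1 * z2 - u2 * z1 in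
    0 <= x /\ 0 <= y /\ x + y <= d /\ ~ (x = 0 /\ y = 0) /\
    ~ (x = d /\ y = 0) /\ ~ (x = 0 /\ y = d).
Proof.
  intros Hd. set (d := u1 * v2 - u2 * v1) in *.
  destruct (classic ((1 * v2 - 0 * v1) mod d = 0 /\ (u1 * 0 - u2 * 1) mod d = 0)) as [H1|H1];
    [|now apply (reduce_to_triangle u1 u2 v1 v2 1 0)].
  destruct (classic ((0 * v2 - 1 * v1) mod d = 0 /\ (u1 * 1 - u2 * 0) mod d = 0)) as [H2|H2];
    [|now apply (reduce_to_triangle u1 u2 v1 v2 0 1)].
  exfalso.
  assert (Hdiv : forall x, x mod d = 0 -> (d | x)) by (intros; apply Z.mod_divide; lia).
  destruct H1 as [[a1 E1]%Hdiv [a2 E2]%Hdiv], H2 as [[a3 E3]%Hdiv [a4 E4]%Hdiv].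
  assert (Ed : d = d * (d * (a4 * a1 - a2 * a3))).
  { unfold d at 1. replace v2 with (a1 * d) by lia. replace u2 with (- (a2 * d)) by lia.
    replace v1 with (- (a3 * d)) by lia. replace u1 with (a4 * d) by lia. ring. }
  clearbody d. clear -Ed Hd. set (m := a4 * a1 - a2 * a3) in *. clearbody m.
  assert (Hm : d * m = 1).
  { assert (E : d * (d * m - 1) = 0) by lia.
    apply Z.mul_eq_0 in E. lia. }
  destruct (Z_le_gt_dec m 0); nia.
Qed.

Close Scope Z_scope.

Definition extra_lattice_point (u v : Z * Z) : Prop :=
  exists (w : Z * Z) (lb lc : R),
    0 <= lb /\ 0 <= lc /\ lb + lc <= 1 /\
    zvec w = vadd (vscale lb (zvec u)) (vscale lc (zvec v)) /\
    w <> (0, 0)%Z /\ w <> u /\ w <> v.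

(* Such a point exists when det(u,v) >= 2: it is given by Cramer's rule from the
   integer coordinates x = det(w,v), y = det(u,w) found above. *)
Lemma extra_lattice_point_pos (u v : Z * Z) : (2 <= zdet u v)%Z -> extra_lattice_point u v.
Proof.
  destruct u as [u1 u2], v as [v1 v2]; intros Hd; unfold zdet in Hd; simpl in Hd.
  destruct (lattice_point_in_triangle u1 u2 v1 v2 Hd)
    as [z1 [z2 [Hx [Hy [Hxy [N0 [Nu Nv]]]]]]].
  set (d := (u1 * v2 - u2 * v1)%Z) in *.
  set (x := (z1 * v2 - z2 * v1)%Z) in *. set (y := (u1 * z2 - u2 * z1)%Z) in *.
  assert (Hdr : 0 < IZR d) by (apply IZR_lt; lia).
  assert (Hdiv : forall r : Z, (0 <= r)%Z -> 0 <= IZR r / IZR d)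
    by (intros r Hr; apply Rmult_le_pos; [apply IZR_le, Hr|left; now apply Rinv_0_lt_compat]).
  exists (z1, z2), (IZR x / IZR d), (IZR y / IZR d).
  assert (Hw1 : (x * u1 + y * v1 = z1 * d)%Z) by (unfold x, y, d; ring).
  assert (Hw2 : (x * u2 + y * v2 = z2 * d)%Z) by (unfold x, y, d; ring).
  apply (f_equal IZR) in Hw1, Hw2. rewrite plus_IZR, !mult_IZR in Hw1, Hw2.
  repeat split.
  - now apply Hdiv.
  - now apply Hdiv.
  - apply (Rmult_le_reg_r (IZR d)); [exact Hdr|].
    replace ((IZR x / IZR d + IZR y / IZR d) * IZR d) with (IZR (x + y))
      by (rewrite plus_IZR; field; lra).
    rewrite Rmult_1_l. apply IZR_le; lia.
  - unfold zvec, vadd, vscale; simpl. f_equal.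
    + replace (IZR z1) with (IZR z1 * IZR d / IZR d) by (field; lra).
      rewrite <- Hw1. field. lra.
    + replace (IZR z2) with (IZR z2 * IZR d / IZR d) by (field; lra).
      rewrite <- Hw2. field. lra.
  - intros E; injection E as -> ->. apply N0. unfold x, y; lia.
  - intros E; injection E as -> ->. apply Nu. unfold x, y, d; lia.
  - intros E; injection E as -> ->. apply Nv. unfold x, y, d; lia.
Qed.

Lemma extra_lattice_point_abs (u v : Z * Z) :
  (2 <= Z.abs (zdet u v))%Z -> extra_lattice_point u v.
Proof.
  intros Habs. destruct (Z_le_gt_dec 2 (zdet u v)) as [H|H]; [now apply extra_lattice_point_pos|].
  destruct (extra_lattice_point_pos v u) as [w [lb [lc [H1 [H2 [H3 [H4 H5]]]]]]];
    [unfold zdet in *; lia|].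
  exists w, lc, lb. repeat split; try tauto; try lra.
  rewrite H4. unfold vadd; simpl; f_equal; ring.
Qed.

Lemma round_to_grid (h : R) (q : R2) :
  0 < h -> exists p, grid h p /\ dot (vsub q p) (vsub q p) <= h * h / 2.
Proof.
  intros hp. destruct q as [q1 q2].
  set (k1 := up (q1 / h - / 2)). set (k2 := up (q2 / h - / 2)).
  destruct (archimed (q1 / h - / 2)) as [A1 B1], (archimed (q2 / h - / 2)) as [A2 B2].
  exists (vscale h (zvec (k1, k2))). split; [now exists (k1, k2)|].
  unfold vsub, vscale, zvec, dot; simpl.
  replace (q1 - h * IZR k1) with (h * (q1 / h - IZR k1)) by (field; lra).
  replace (q2 - h * IZR k2) with (h * (q2 / h - IZR k2)) by (field; lra).
  fold k1 k2 in A1, B1, A2, B2.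
  assert ((q1 / h - IZR k1) * (q1 / h - IZR k1) <= / 4) by nra.
  assert ((q2 / h - IZR k2) * (q2 / h - IZR k2) <= / 4) by nra.
  nra.
Qed.

Lemma grid_shift (h : R) (A : R2) (w : Z * Z) : grid h A -> grid h (vadd A (vscale h (zvec w))).
Proof.
  intros [[k1 k2] ->]. exists ((k1 + fst w)%Z, (k2 + snd w)%Z).
  unfold vadd, vscale, zvec; simpl. rewrite !plus_IZR. f_equal; ring.
Qed.

Lemma grid_reflect (h : R) (a b c : R2) :
  grid h a -> grid h b -> grid h c -> grid h (vsub (vadd a c) b).
Proof.
  intros [[a1 a2] ->] [[b1 b2] ->] [[c1 c2] ->].
  exists ((a1 + c1 - b1)%Z, (a2 + c2 - b2)%Z).
  unfold vsub, vadd, vscale, zvec; simpl. rewrite !minus_IZR, !plus_IZR. f_equal; ring.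
Qed.

Lemma edges_sum (h : R) (a b c : R2) (e f : Z * Z) :
  vsub b a = vscale h (zvec e) -> vsub c b = vscale h (zvec f) ->
  vsub c a = vscale h (zvec (fst e + fst f, snd e + snd f)%Z).
Proof.
  destruct a, b, c; unfold vsub, vscale, zvec; simpl. intros E F.
  injection E as E1 E2; injection F as F1 F2. rewrite !plus_IZR. f_equal; lra.
Qed.

Lemma edges_det (h : R) (a b c : R2) (e f : Z * Z) :
  vsub b a = vscale h (zvec e) -> vsub c b = vscale h (zvec f) ->
  det2 (vsub b a) (vsub c a) = h * h * IZR (zdet e f).
Proof.
  intros He Hf. rewrite (edges_sum h a b c e f He Hf), He, <- det2_zvec.
  unfold det2, zvec, vscale; simpl. rewrite !plus_IZR. ring.
Qed.

Lemma zdet_add_r (e f : Z * Z) : zdet e (fst e + fst f, snd e + snd f)%Z = zdet e f.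
Proof. unfold zdet; simpl; ring. Qed.

Section Voronoi.
Variable D : R2 -> Sym2.
Variables K h : R.
Hypothesis KU : forall z x, quad (Mof D z) x <= K * dot x x.
Hypothesis KL : forall z x, dot x x <= K * quad (Mof D z) x.
Hypothesis K1 : 1 <= K.
Hypothesis hpos : 0 < h.
Variable q : R2.
Variable r2 : R.
Hypothesis Hvor : forall p, grid h p -> r2 <= quad (Mof D p) (vsub q p).

Definition on_sphere (A : R2) : Prop := quad (Mof D A) (vsub q A) = r2.

(* Comparing with the nearest grid point: r2 <= kappa h^2 / 2. *)
Lemma radius_bound : r2 <= K * (h * h) / 2.
Proof.
  destruct (round_to_grid h q hpos) as [p [Hp Hd]].
  eapply Rle_trans; [apply Hvor, Hp|]. eapply Rle_trans; [apply KU|]. nra.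
Qed.

Lemma radius_nonneg (A : R2) : on_sphere A -> 0 <= r2.
Proof. intros HA. rewrite <- HA. apply (quad_nonneg D K KL K1). Qed.

Lemma sphere_point_near (A : R2) :
  on_sphere A -> dot (vsub q A) (vsub q A) <= K * K * (h * h) / 2.
Proof.
  intros HA. eapply Rle_trans; [apply KL|]. rewrite HA.
  pose proof radius_bound. nra.
Qed.

Lemma chord_bound (A B : R2) :
  on_sphere A -> on_sphere B -> dot (vsub B A) (vsub B A) <= 2 * (K * K) * (h * h).
Proof.
  intros HA HB. rewrite <- (vsub_vsub_cancel q).
  pose proof (dot_sub_le (vsub q A) (vsub q B)).
  pose proof (sphere_point_near A HA). pose proof (sphere_point_near B HB). lra.
Qed.

Lemma edge_vector_bound (A B : R2) (e : Z * Z) :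
  on_sphere A -> on_sphere B -> vsub B A = vscale h (zvec e) -> enorm (zvec e) <= 2 * K.
Proof.
  intros HA HB He. pose proof (chord_bound A B HA HB) as Hc.
  rewrite He, dot_vscale in Hc.
  assert (dot (zvec e) (zvec e) <= 2 * (K * K)) by (apply (Rmult_le_reg_l (h * h)); nra).
  apply enorm_le; nra.
Qed.

Variable tau : R.
Hypothesis Htau : forall p p', enorm (vsub p p') <= 2 * K * h ->
  metric_close tau (Mof D p) (Mof D p').
Hypothesis Htk : K * K * (tau * tau - 1) < 1.

(* At such a point T the Voronoi inequality and the barycentric
   identity give K r2 + h^2 <= K tau^2 r2, impossible since r2 <= K h^2 / 2. *)
Lemma no_grid_point_in_triangle (A B C T : R2) (la lb lc : R) :
  on_sphere A -> on_sphere B -> on_sphere C -> grid h T ->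
  0 <= la -> 0 <= lb -> 0 <= lc -> la + lb + lc = 1 ->
  T = comb3 la lb lc A B C ->
  h * h <= dot (vsub T A) (vsub T A) -> h * h <= dot (vsub T B) (vsub T B) ->
  h * h <= dot (vsub T C) (vsub T C) -> False.
Proof.
  intros HA HB HC HT Ha Hb Hc Hs ET FA FB FC.
  set (N := Mof D T).
  assert (Hvertex : forall X, on_sphere X ->
    dot (vsub T X) (vsub T X) <= 2 * (K * K) * (h * h) ->
    quad N (vsub q X) <= tau * tau * r2).
  { intros X HX Hd. unfold on_sphere in HX. rewrite <- HX.
    apply (Htau X T). apply enorm_le; [nra|]. rewrite dot_vsub_sym. nra. }
  assert (Hnear : forall X, on_sphere X ->
    dot (vsub T X) (vsub T X) <= 2 * (K * K) * (h * h)).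
  { intros X HX. rewrite ET. eapply Rle_trans; [apply dot_comb3_le; auto|].
    pose proof (chord_bound X A HX HA). pose proof (chord_bound X B HX HB).
    pose proof (chord_bound X C HX HC). nra. }
  assert (Hfar : forall X, h * h <= dot (vsub T X) (vsub T X) ->
    h * h <= K * quad N (vsub (vsub q X) (vsub q T))).
  { intros X HX. rewrite vsub_vsub_cancel. eapply Rle_trans; [exact HX|]. apply KL. }
  pose proof (quad_comb3 N la lb lc (vsub q A) (vsub q B) (vsub q C) Hs) as Hbary.
  rewrite <- vsub_comb3, <- ET in Hbary by exact Hs.
  pose proof (Hvor T HT) as HvT. fold N in HvT.
  pose proof (Hvertex A HA (Hnear A HA)). pose proof (Hvertex B HB (Hnear B HB)).
  pose proof (Hvertex C HC (Hnear C HC)).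
  pose proof (Hfar A FA). pose proof (Hfar B FB). pose proof (Hfar C FC).
  assert (Hsum : K * r2 + h * h <= K * (tau * tau) * r2).
  { assert (la * quad N (vsub q A) + lb * quad N (vsub q B) + lc * quad N (vsub q C)
            <= tau * tau * r2) by nra.
    nra. }
  pose proof radius_bound. pose proof (radius_nonneg A HA).
  assert (h * h <= K * (tau * tau - 1) * r2) by lra.
  assert (0 <= K * (tau * tau - 1)) by nra.
  assert (K * (tau * tau - 1) * r2 <= K * (tau * tau - 1) * (K * (h * h) / 2))
    by (apply Rmult_le_compat_l; lra).
  nra.
Qed.

Lemma sphere_triangle_unimodular (A B C : R2) (u v : Z * Z) :
  on_sphere A -> on_sphere B -> on_sphere C -> grid h A ->
  vsub B A = vscale h (zvec u) -> vsub C A = vscale h (zvec v) ->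
  (Z.abs (zdet u v) <= 1)%Z.
Proof.
  intros HA HB HC GA Hu Hv.
  destruct (Z_le_gt_dec 2 (Z.abs (zdet u v))) as [H2|H2]; [exfalso|lia].
  destruct (extra_lattice_point_abs u v H2) as [w [lb [lc [Hb [Hc [Hbc [Hw [N0 [Nu Nv]]]]]]]]].
  set (T := vadd A (vscale h (zvec w))).
  assert (Hdist : forall X k, vsub X A = vscale h (zvec k) -> k <> w ->
    h * h <= dot (vsub T X) (vsub T X)).
  { intros X k HX Hk.
    replace (vsub T X) with (vscale h (zvec (fst w - fst k, snd w - snd k)%Z)).
    - rewrite dot_vscale. pose proof (zvec_norm_ge1 (fst w - fst k, snd w - snd k)%Z) as H1.
      assert (h * h * 1 <= h * h * dot (zvec (fst w - fst k, snd w - snd k)%Z)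
                (zvec (fst w - fst k, snd w - snd k)%Z)).
      { apply Rmult_le_compat_l; [nra|]. apply H1.
        intros E. apply Hk. destruct w, k; injection E; simpl; intros; f_equal; lia. }
      lra.
    - rewrite zvec_sub. unfold T. destruct X, A; unfold vsub, vadd, vscale in *; simpl in *.
      injection HX as HX1 HX2. f_equal; lra. }
  apply (no_grid_point_in_triangle A B C T (1 - lb - lc) lb lc); auto; try lra.
  - apply grid_shift, GA.
  - unfold T, comb3. rewrite Hw.
    destruct A, B, C; unfold vsub, vadd, vscale in *; simpl in *.
    injection Hu as Hu1 Hu2; injection Hv as Hv1 Hv2. f_equal; nra.
  - apply (Hdist A (0, 0)%Z); [unfold vsub, vscale, zvec; simpl; f_equal; ring|congruence].
  - apply (Hdist B u Hu); congruence.
  - apply (Hdist C v Hv); congruence.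
Qed.

Lemma unimodular_edges (a b c : R2) (e f : Z * Z) :
  on_sphere a -> on_sphere b -> on_sphere c -> grid h a ->
  vsub b a = vscale h (zvec e) -> vsub c b = vscale h (zvec f) ->
  det2 (vsub b a) (vsub c a) <> 0 ->
  Rabs (det2 (zvec e) (zvec f)) = 1 /\ Rabs (det2 (vsub b a) (vsub c a)) / 2 = h ^ 2 / 2.
Proof.
  intros Ha Hb Hc Ga He Hf Hnd.
  assert (Hdet : det2 (vsub b a) (vsub c a) = h * h * IZR (zdet e f))
    by exact (edges_det h a b c e f He Hf).
  assert (Hle : (Z.abs (zdet e f) <= 1)%Z).
  { rewrite <- zdet_add_r.
    exact (sphere_triangle_unimodular a b c _ _ Ha Hb Hc Ga He (edges_sum h a b c e f He Hf)). }
  assert (Hne : zdet e f <> 0%Z) by (intros H0; apply Hnd; rewrite Hdet, H0; ring).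
  assert (Habs : Rabs (IZR (zdet e f)) = 1)
    by (rewrite Rabs_Zabs; replace (Z.abs (zdet e f)) with 1%Z by lia; reflexivity).
  rewrite det2_zvec, Hdet, Rabs_mult, Habs, Rabs_pos_eq by nra. split; [reflexivity|field].
Qed.

Variable tau2 : R.
Hypothesis Htau2_1 : 1 <= tau2.
Hypothesis Htau2 : forall p p', enorm (vsub p p') <= 2 * K * (2 * h) ->
  metric_close tau2 (Mof D p) (Mof D p').

Lemma reflected_point_near (A B C : R2) :
  on_sphere A -> on_sphere B -> on_sphere C ->
  let P := vsub (vadd A C) B in
  dot (vsub A P) (vsub A P) <= 8 * (K * K) * (h * h) /\
  dot (vsub B P) (vsub B P) <= 8 * (K * K) * (h * h) /\
  dot (vsub C P) (vsub C P) <= 8 * (K * K) * (h * h).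
Proof.
  intros HA HB HC P.
  pose proof (chord_bound A B HA HB) as dAB. pose proof (chord_bound B C HB HC) as dBC.
  pose proof (dot_sub_le (vsub B A) (vsub C B)).
  replace (vsub A P) with (vsub B C) by (unfold P, vsub, vadd; simpl; f_equal; ring).
  replace (vsub B P) with (vsub (vsub B A) (vsub C B))
    by (unfold P, vsub, vadd; simpl; f_equal; ring).
  replace (vsub C P) with (vsub B A) by (unfold P, vsub, vadd; simpl; f_equal; ring).
  rewrite (dot_vsub_sym B C). repeat split; nra.
Qed.

(* At the reflected point P, when it is a grid point, the Voronoi inequality bounds
   <B - A, M(P) (C - B)>, and the parallelogram law bounds the edge lengths in M(P). *)
Lemma reflected_vertex_bounds (A B C : R2) :
  on_sphere A -> on_sphere B -> on_sphere C -> grid h (vsub (vadd A C) B) ->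
  let N := Mof D (vsub (vadd A C) B) in
  2 * bilin N (vsub B A) (vsub C B) <= 3 * (tau2 * tau2 - 1) * r2 /\
  quad N (vsub B A) + quad N (vsub C B) <= 8 * (tau2 * tau2) * r2.
Proof.
  intros HA HB HC HP N.
  destruct (reflected_point_near A B C HA HB HC) as [dA [dB dC]].
  set (P := vsub (vadd A C) B) in *.
  assert (Hclose : forall X, dot (vsub X P) (vsub X P) <= 8 * (K * K) * (h * h) ->
    metric_close tau2 (Mof D X) N) by (intros X HX; apply Htau2, enorm_le; nra).
  assert (HN : forall v, 0 <= quad N v) by (intros; apply (quad_nonneg D K KL K1)).
  pose proof (radius_nonneg A HA) as Hr0. unfold on_sphere in HA, HB, HC.
  destruct (Hclose A dA (vsub q A)) as [QA _]. destruct (Hclose B dB (vsub q B)) as [_ QBl].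
  destruct (Hclose C dC (vsub q C)) as [QC _]. rewrite HA in QA. rewrite HB in QBl.
  rewrite HC in QC.
  pose proof (ratio_lower_bound (tau2 * tau2) (quad N (vsub q B)) r2 ltac:(nra) Hr0 QBl) as QB.
  pose proof (Hvor P HP) as HvP. fold N in HvP. unfold P in HvP.
  rewrite quad_reflect_identity in HvP.
  split; [lra|].
  destruct (Hclose B dB (vsub q B)) as [QBu _]. rewrite HB in QBu.
  pose proof (quad_sub_le N (vsub q A) (vsub q B) HN).
  pose proof (quad_sub_le N (vsub q B) (vsub q C) HN).
  rewrite !vsub_vsub_cancel in *. lra.
Qed.

Lemma sphere_triangle_bilin_bound (A B C z : R2) (la lb lc : R) (e f : Z * Z) :
  on_sphere A -> on_sphere B -> on_sphere C -> grid h (vsub (vadd A C) B) ->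
  0 <= la -> 0 <= lb -> 0 <= lc -> la + lb + lc = 1 -> z = comb3 la lb lc A B C ->
  vsub B A = vscale h (zvec e) -> vsub C B = vscale h (zvec f) ->
  bilin (Mof D z) (zvec e) (zvec f) <= K * (3 + 9 * tau2 ^ 2) * (tau2 ^ 2 - 1).
Proof.
  intros HA HB HC HP Ha Hb Hc Hs Ez He Hf.
  destruct (reflected_vertex_bounds A B C HA HB HC HP) as [Hbil Hq].
  destruct (reflected_point_near A B C HA HB HC) as [dA [dB dC]].
  set (P := vsub (vadd A C) B) in *. set (N := Mof D P) in *.
  assert (HzP : metric_close tau2 N (Mof D z)).
  { apply Htau2, enorm_le; [nra|].
    rewrite dot_vsub_sym, Ez. eapply Rle_trans; [apply dot_comb3_le; auto|]. nra. }
  pose proof (bilin_transfer tau2 (Mof D z) N (vsub B A) (vsub C B) Htau2_1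
    (fun v => quad_nonneg D K KL K1 P v) HzP) as Htr.
  rewrite He, Hf, bilin_vscale in Htr. rewrite He, Hf in Hbil, Hq.
  replace (tau2 ^ 2) with (tau2 * tau2) by ring.
  set (t := tau2 * tau2) in *.
  assert (Ht : 1 <= t) by (unfold t; nra).
  pose proof radius_bound. pose proof (radius_nonneg A HA).
  assert (Hr : (t - 1) * r2 <= (t - 1) * (K * (h * h) / 2)) by (apply Rmult_le_compat_l; lra).
  assert (HQ : (t - 1) * (quad N (vscale h (zvec e)) + quad N (vscale h (zvec f)))
               <= (t - 1) * (8 * t * r2)) by (apply Rmult_le_compat_l; lra).
  assert (Hfin : h * h * bilin (Mof D z) (zvec e) (zvec f) <=
                 (t - 1) * (K * (h * h) / 2) * (3 / 2 + 4 * t)) by nra.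
  apply (Rmult_le_reg_l (h * h)); [nra|].
  eapply Rle_trans; [exact Hfin|].
  assert (0 <= h * h * K * (t - 1)) by (apply Rmult_le_pos; [|lra]; apply Rmult_le_pos; nra).
  nra.
Qed.

End Voronoi.

Lemma inVor_quad (D : R2 -> Sym2) (K h : R) (p q : R2) :
  (forall z x, dot x x <= K * quad (Mof D z) x) -> 1 <= K -> inVor D h p q ->
  grid h p /\ forall p', grid h p' -> quad (Mof D p) (vsub q p) <= quad (Mof D p') (vsub q p').
Proof.
  intros KL K1 [G H]. split; [exact G|]. intros p' G'. specialize (H p' G').
  unfold delta, Mnorm in H. apply sqrt_le_0; auto; apply (quad_nonneg D K KL K1).
Qed.

Lemma triangle_nondegenerate (V : R2 -> Prop) (a b c : R2) : is_triangle_vs V ->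
  set_eq V (fun x => x = a \/ x = b \/ x = c) -> det2 (vsub b a) (vsub c a) <> 0.
Proof.
  intros [a' [b' [c' [Hd Hs]]]] Habc Hz. apply Hd.
  assert (Ha : a' = a \/ a' = b \/ a' = c) by (apply Habc, Hs; auto).
  assert (Hb : b' = a \/ b' = b \/ b' = c) by (apply Habc, Hs; auto).
  assert (Hc : c' = a \/ c' = b \/ c' = c) by (apply Habc, Hs; auto).
  destruct a as [a1 a2], b as [b1 b2], c as [c1 c2].
  unfold det2, vsub in *; simpl in *.
  destruct Ha as [ -> | [ -> | -> ] ]; destruct Hb as [ -> | [ -> | -> ] ];
    destruct Hc as [ -> | [ -> | -> ] ]; simpl; nra.
Qed.

Lemma voronoi_vertex (D : R2 -> Sym2) (K h : R) (q a b c : R2) :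
  (forall z x, dot x x <= K * quad (Mof D z) x) -> 1 <= K ->
  inVor D h a q -> inVor D h b q -> inVor D h c q ->
  exists r2, (forall p, grid h p -> r2 <= quad (Mof D p) (vsub q p)) /\
    grid h a /\ grid h b /\ grid h c /\
    on_sphere D q r2 a /\ on_sphere D q r2 b /\ on_sphere D q r2 c.
Proof.
  intros KL K1 Ha Hb Hc.
  apply (inVor_quad D K) in Ha as [Ga Va], Hb as [Gb Vb], Hc as [Gc Vc]; auto.
  exists (quad (Mof D a) (vsub q a)). unfold on_sphere.
  repeat split; auto; apply Rle_antisym; auto.
Qed.

Theorem mainTheorem8
  (D : R2 -> Sym2) (HD : D_admissible D)
  (K : R) (HK : is_kappa_max D K)
  (n : nat) (Hn : (1 <= n)%nat)
  (tauh tau2h : R)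
  (Htauh : is_tau_h D K (/ INR n) tauh)
  (Htau2h : is_tau_h D K (2 * / INR n) tau2h)
  (Hass : tauh < sqrt (1 + / (K * K)))
  (Th : (R2 -> Prop) -> Prop) (HTh : ADT D (/ INR n) Th)
  (V : R2 -> Prop) (HV : Th V)
  (a b c : R2) (Habc : set_eq V (fun x => x = a \/ x = b \/ x = c))
  (e f g : Z * Z)
  (He : vsub b a = vscale (/ INR n) (zvec e))
  (Hf : vsub c b = vscale (/ INR n) (zvec f))
  (Hg : vsub a c = vscale (/ INR n) (zvec g)) :
  Rmax (enorm (zvec e)) (Rmax (enorm (zvec f)) (enorm (zvec g))) <= 2 * K /\
  (Rabs (det2 (zvec e) (zvec f)) = 1 /\
   Rabs (det2 (vsub b a) (vsub c a)) / 2 = (/ INR n) ^ 2 / 2) /\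
  (forall z, conv V z ->
     bilin (Mof D z) (zvec e) (zvec f)
       <= K * (3 + 9 * tau2h ^ 2) * (tau2h ^ 2 - 1)).
Proof.
  destruct HD as [HS _]. destruct (kappa_bounds D K HS HK) as [KU [KL K1]].
  assert (hpos : 0 < / INR n) by (apply Rinv_0_lt_compat, lt_0_INR; lia).
  set (h := / INR n) in *.
  destruct HTh as [Htri [_ [_ [Hgen _]]]]. destruct (Hgen V HV) as [q [_ Hsub]].
  destruct (voronoi_vertex D K h q a b c KL K1)
    as [r2 [Hvor [Ga [Gb [Gc [Sa [Sb Sc]]]]]]]; try (apply Hsub, Habc; auto).
  destruct (tau_h_facts D K KU KL K1 h tauh ltac:(lra) Htauh) as [T1 Htau].
  destruct (tau_h_facts D K KU KL K1 (2 * h) tau2h ltac:(lra) Htau2h) as [T2 Htau2].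
  pose proof (edge_vector_bound D K h KU KL K1 hpos q r2 Hvor) as Hedge.
  split; [|split].
  - apply Rmax_lub; [exact (Hedge a b e Sa Sb He)|].
    apply Rmax_lub; [exact (Hedge b c f Sb Sc Hf)|exact (Hedge c a g Sc Sa Hg)].
  - apply (unimodular_edges D K h KU KL K1 hpos q r2 Hvor tauh Htau
      (tau_small K tauh K1 T1 Hass)); auto.
    exact (triangle_nondegenerate V a b c (Htri V HV) Habc).
  - intros z Hz.
    destruct (conv_triangle V a b c z Habc Hz) as [la [lb [lc [La [Lb [Lc [Ls Ez]]]]]]].
    apply (sphere_triangle_bilin_bound D K h KU KL K1 hpos q r2 Hvor tau2h T2 Htau2
      a b c z la lb lc); auto.
    now apply grid_reflect.
Qed.
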